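(* Let $k\ge 1$ and let $G$ be an $\mathcal{O}_k$-free graph of minimum degree at least 2. If $x$ is a vertex of degree $d$ in $G$, then $r(G)-r(G-x)\ge \frac{d-k+1}{2}$.
   Context: All graphs are finite and simple. The cycle rank of a graph $G$ is $r(G)=|E(G)|-|V(G)|+|\mathcal{C}(G)|$, where $\mathcal{C}(G)$ is the set of connected components of $G$. Two vertex-disjoint subgraphs are independent if there is no edge between them. A graph $G$ is $\mathcal{O}_k$-free if it does not contain $k$ pairwise vertex-disjoint and pairwise independent cycles; equivalently, $G$ has no induced subgraph isomorphic to a disjoint union of $k$ cycles. *)

From mathcomp Require Import all_boot all_order all_algebra.
Set Implicit Arguments. Unset Strict Implicit. Unset Printing Implicit Defensive.
Import GRing.Theory Num.Theory.

Definition simple_graph (T : finType) (e : rel T) : Prop :=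
  symmetric e /\ irreflexive e.

Definition induced_rel (T : finType) (e : rel T) (S : {set T}) : rel T :=
  fun u v => [&& u \in S, v \in S & e u v].

Definition n_edges (T : finType) (e : rel T) (S : {set T}) : nat :=
  #|[set A : {set T} | (A \subset S) &&
      [exists u, exists v, (A == [set u; v]) && e u v]]|.

Definition n_components (T : finType) (e : rel T) (S : {set T}) : nat :=
  n_comp (induced_rel e S) (mem S).

Definition cycle_rank (T : finType) (e : rel T) (S : {set T}) : int :=
  (n_edges e S)%:Z - (#|S|)%:Z + (n_components e S)%:Z.

Definition degree (T : finType) (e : rel T) (x : T) : nat := #|[set y | e x y]|.

Definition is_cycle (T : finType) (e : rel T) (c : seq T) : Prop :=
  [/\ 3 <= size c, uniq c & cycle e c].

Definition has_Ok (T : finType) (e : rel T) (k : nat) : Prop :=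
  exists c : 'I_k -> seq T,
    (forall i, is_cycle e (c i)) /\
    (forall i j, i != j -> forall u v, u \in c i -> v \in c j ->
        u != v /\ ~~ e u v).

Definition Ok_free (T : finType) (e : rel T) (k : nat) : Prop := ~ has_Ok e k.

From mathcomp Require Import all_boot all_order all_algebra.
From mathcomp Require Import zify lra.
Set Implicit Arguments. Unset Strict Implicit. Unset Printing Implicit Defensive.

(* r(G) - r(G - x) = d - 1 - (c(G - x) - c(G)), and deleting x splits its
   component into at most m components of G - x, namely those meeting N(x);
   so the difference is at least d - m.  A component of G - x joined to x by a
   single edge has minimum degree 2 except at one vertex, so closing a longest
   path in it yields a cycle; these cycles are pairwise independent, hence
   there are at most k - 1 such components.  Each of the remaining ones among
   the m receives at least two edges from x, whence 2m <= d + k - 1. *)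

Section CycleInSet.
Variables (T : finType) (e : rel T) (C : {set T}).
Hypotheses (e_sym : symmetric e) (e_irr : irreflexive e).

Definition simple_path_in (p : seq T) : bool :=
  if p is v :: q then [&& uniq p, all (mem C) p & path e v q] else false.

Definition longest_path_in (p : seq T) : Prop :=
  forall p', simple_path_in p' -> size p' <= size p.

Definition two_nbrs_in (v : T) : Prop :=
  exists u1 u2, [/\ u1 != u2, e v u1, e v u2, u1 \in C & u2 \in C].

Lemma simple_path_in_size p : simple_path_in p -> size p <= #|T|.
Proof.
by case: p => // v q /and3P[p_uniq _ _]; rewrite -(card_uniqP p_uniq) max_card.
Qed.

Lemma simple_path_in_head v q : simple_path_in (v :: q) -> v \in C.
Proof. by case/and3P=> _ /allP/(_ v (mem_head v q)). Qed.

Lemma exists_longest_path_in w : w \in C ->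
  exists p, simple_path_in p /\ longest_path_in p.
Proof.
move=> wC; pose P n := [exists p : n.-tuple T, simple_path_in p].
have P1 : P 1 by apply/existsP; exists [tuple w]; rewrite /= wC.
have P_bounded n : P n -> n <= #|T|.
  by case/existsP=> p /simple_path_in_size; rewrite size_tuple.
case: (ex_maxnP (ex_intro P 1 P1) P_bounded) => n /existsP[p p_path] p_max.
exists p; split=> // p' p'_path; rewrite size_tuple.
by apply: p_max; apply/existsP; exists (in_tuple p').
Qed.

Lemma longest_path_in_head_nbr v q a :
  simple_path_in (v :: q) -> longest_path_in (v :: q) -> e v a -> a \in C ->
  a \in v :: q.
Proof.
move=> vq_path vq_max eva aC; apply/negPn/negP => a_notin.
suff /vq_max : simple_path_in [:: a, v & q] by rewrite /= ltnn.
move: vq_path a_notin => /= /and3P[-> -> ->].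
by rewrite aC e_sym eva !andbT.
Qed.

Lemma cycle_of_longest_path_in v q :
  simple_path_in (v :: q) -> longest_path_in (v :: q) -> two_nbrs_in v ->
  exists c, is_cycle e c /\ {subset c <= C}.
Proof.
move=> vq_path vq_max [u1 [u2 [u12 e1 e2 u1C u2C]]].
have nbr_in_tail u : e v u -> u \in C -> u \in q.
  move=> evu uC; move: (longest_path_in_head_nbr vq_path vq_max evu uC).
  by rewrite inE; case: eqP => [uv|//]; rewrite uv e_irr in evu.
(* By maximality both neighbours lie on q; one of them, u, is not the successor
   of v, and the segment of the path from v to u closes up to a cycle. *)
have [u [uq u_not_head evu]] : exists u, [/\ u \in q, u != head u q & e v u].
  case: q vq_path vq_max nbr_in_tail => [|a q'] _ _ nbr_in_tail.
    by have := nbr_in_tail _ e1 u1C.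
  case: (eqVneq u1 a) => [u1a|u1a]; last by exists u1; rewrite nbr_in_tail.
  by exists u2; rewrite nbr_in_tail //= -u1a eq_sym.
case/splitPr: uq vq_path u_not_head => q1 q2 vq_path u_not_head.
have q1_nonempty : q1 != [::] by case: q1 vq_path u_not_head => //=; rewrite eqxx.
move: vq_path => /and3P[vq_uniq vq_in vq_e].
have vq_cat : v :: q1 ++ u :: q2 = (v :: rcons q1 u) ++ q2 by rewrite -cat_rcons.
exists (v :: rcons q1 u); split; last first.
  by move=> z zc; apply: (allP vq_in); rewrite vq_cat mem_cat zc.
split.
- by rewrite /= size_rcons; case: (q1) q1_nonempty.
- by move: vq_uniq; rewrite vq_cat cat_uniq => /andP[].
- rewrite /= rcons_path last_rcons.
  by move: vq_e; rewrite -cat_rcons cat_path => /andP[-> _] /=; rewrite e_sym.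
Qed.

Lemma exists_cycle_in w : w \in C ->
  (forall v, v \in C -> v != w -> two_nbrs_in v) ->
  (exists2 u, e w u & u \in C) ->
  exists c, is_cycle e c /\ {subset c <= C}.
Proof.
move=> wC two_nbrs [a ewa aC].
have [[|v q] [vq_path vq_max]] := exists_longest_path_in wC; first by [].
case: (eqVneq v w) => [vw|vw]; last first.
  apply: (cycle_of_longest_path_in vq_path vq_max); apply: two_nbrs => //.
  exact: simple_path_in_head vq_path.
subst v; case: q vq_path vq_max => [|b q] wq_path wq_max.
  suff /wq_max : simple_path_in [:: a; w] by [].
  rewrite /= aC wC e_sym ewa !andbT inE; apply: contraTneq ewa => ->.
  by rewrite e_irr.
(* The longest path starts at w: reverse it to start at a vertex z != w. *)
set z := last b q.
have wq_rev : rev [:: w, b & q] = z :: rev (belast w (b :: q)).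
  by rewrite [w :: b :: q]lastI rev_rcons.
have z_path : simple_path_in (z :: rev (belast w (b :: q))).
  move: (wq_path); rewrite /simple_path_in -wq_rev rev_uniq all_rev.
  case/and3P=> -> -> wq_e /=.
  have wq_e' : path (fun s t => e t s) w (b :: q).
    by rewrite (eq_path (e' := e)) // => s t; apply: e_sym.
  by move: wq_e'; rewrite -rev_path.
have z_max : longest_path_in (z :: rev (belast w (b :: q))).
  by move=> p' /wq_max; rewrite -wq_rev size_rev.
apply: (cycle_of_longest_path_in z_path z_max); apply: two_nbrs.
  exact: simple_path_in_head z_path.
move: wq_path => /and3P[/= /andP[w_notin _] _ _].
by apply: contraNneq w_notin => <-; rewrite mem_last.
Qed.

End CycleInSet.

Section InducedRel.
Variables (T : finType) (e : rel T).

Lemma induced_rel_connect_sym (S : {set T}) :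
  symmetric e -> connect_sym (induced_rel e S).
Proof.
move=> e_sym; apply: sym_connect_sym => u v.
by rewrite /induced_rel e_sym; case: (u \in S); case: (v \in S).
Qed.

Lemma connect_induced_relT : connect (induced_rel e [set: T]) =2 connect e.
Proof. by apply: eq_connect => u v; rewrite /induced_rel !inE. Qed.

Lemma connect_induced_rel_closed (S : {set T}) u v :
  connect (induced_rel e S) u v -> u \in S -> v \in S.
Proof.
case/connectP=> p + ->; elim: p u => //= a p IHp u /andP[/and3P[_ aS _]].
by move=> /IHp/(_ aS).
Qed.

End InducedRel.

Section DeleteVertex.
Variables (T : finType) (e : rel T) (x : T).
Hypotheses (e_sym : symmetric e) (e_irr : irreflexive e).

Let Vx : {set T} := ~: [set x].
Let Nx : {set T} := [set y | e x y].
Let ex : rel T := induced_rel e Vx.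
Let ex_sym : connect_sym ex := induced_rel_connect_sym Vx e_sym.

Lemma n_edges_del_vertex : n_edges e [set: T] = (n_edges e Vx + degree e x)%N.
Proof.
rewrite /n_edges /degree -/Nx.
set ET := [set B : {set T} | _ & _]; set EV := [set B : {set T} | _ & _].
have ET_x_free : ET :\: [set B : {set T} | x \in B] = EV.
  apply/setP => B; rewrite !inE subsetT /= /Vx subsetC sub1set !inE.
  by case: (x \in B).
have ET_at_x : ET :&: [set B : {set T} | x \in B] = (fun y => [set x; y]) @: Nx.
  apply/setP => B; rewrite !inE subsetT /=; apply/idP/idP.
  - case/andP => /existsP[u /existsP[v /andP[/eqP -> euv]]].
    rewrite in_set2 => /orP[] /eqP xe.
      by apply/imsetP; exists v; rewrite ?inE xe.
    by apply/imsetP; exists u; [rewrite inE xe e_sym | rewrite xe setUC].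
  - case/imsetP => y; rewrite inE => exy ->; rewrite !inE eqxx andbT.
    by apply/existsP; exists x; apply/existsP; exists y; rewrite eqxx.
rewrite -(cardsID [set B : {set T} | x \in B] ET) ET_x_free ET_at_x addnC.
rewrite card_in_imset // => y1 y2; rewrite !inE => exy1 _ y12.
have : y1 \in [set x; y2] by rewrite -y12 !inE eqxx orbT.
rewrite in_set2 => /orP[] /eqP // y1x.
by rewrite y1x e_irr in exy1.
Qed.

Lemma nbr_del_vertex y : e x y -> y \in Vx.
Proof. by rewrite !inE; apply: contraTneq => ->; rewrite e_irr. Qed.

Lemma connect_del_vertex u v : u \in Vx -> connect e u v ->
  connect ex u v \/ exists2 y, e x y & connect ex u y.
Proof.
move=> uV /connectP[p + ->]; elim: p u uV => [|a p IHp] u uV /=.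
  by left; apply: connect0.
case/andP=> eua a_path; case: (eqVneq a x) => [ax|ax].
  by right; exists u; [rewrite -ax e_sym | apply: connect0].
have aV : a \in Vx by rewrite !inE.
have exua : ex u a by rewrite /ex /induced_rel uV aV eua.
case: (IHp a aV a_path) => [av|[y exy ay]]; [left | right; exists y] => //.
  exact: connect_trans (connect1 exua) av.
exact: connect_trans (connect1 exua) ay.
Qed.

Definition nbr_roots : {set T} := [set fingraph.root ex y | y in Nx].

Lemma n_components_del_vertex :
  (n_components e Vx + 1 <= n_components e [set: T] + #|nbr_roots|)%N.
Proof.
set eT := induced_rel e [set: T].
have eT_sym : connect_sym eT := induced_rel_connect_sym [set: T] e_sym.
set RV := [set r | roots ex r && (r \in Vx)]; set RT := [set r | roots eT r].
have cV : n_components e Vx = #|RV|.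
  by apply: eq_card => r; rewrite !inE.
have cT : n_components e [set: T] = #|RT|.
  by apply: eq_card => r; rewrite !inE andbT.
have nbr_roots_sub : nbr_roots \subset RV.
  apply/subsetP => r /imsetP[y]; rewrite inE => /nbr_del_vertex yV ->.
  rewrite inE (roots_root ex_sym) /=.
  exact: connect_induced_rel_closed (connect_root _ _) yV.
(* A component of G - x avoiding N(x) is already a component of G. *)
have far_closed r :
    r \in RV :\: nbr_roots -> forall v, connect e r v -> connect ex r v.
  rewrite !inE => /andP[rM /andP[rr rV]] v rv.
  have rV' : r \in Vx by rewrite !inE.
  case: (connect_del_vertex rV' rv) => // [[y exy ry]].
  case/negP: rM; apply/imsetP; exists y; first by rewrite inE.
  by rewrite -(eqP rr); apply/(fingraph.rootP ex_sym).
have root_inj : {in RV :\: nbr_roots &, injective (fingraph.root eT)}.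
  move=> r1 r2 r1_far r2_far /(fingraph.rootP eT_sym).
  rewrite connect_induced_relT => /(far_closed _ r1_far) r12.
  move: r1_far r2_far; rewrite !inE => /and3P[_ /eqP <- _] /and3P[_ /eqP <- _].
  exact/(fingraph.rootP ex_sym).
have root_sub :
    fingraph.root eT @: (RV :\: nbr_roots) \subset RT :\ fingraph.root eT x.
  apply/subsetP => z /imsetP[r r_far ->]; rewrite !inE (roots_root eT_sym) andbT.
  apply/negP => /eqP/(fingraph.rootP eT_sym).
  rewrite connect_induced_relT => /(far_closed _ r_far) rx.
  move: r_far; rewrite !inE => /and3P[_ _ rV].
  by have := connect_induced_rel_closed rx; rewrite !inE eqxx => /(_ rV).
have := subset_leq_card root_sub; rewrite card_in_imset //.
have := cardsD1 (fingraph.root eT x) RT; rewrite inE (roots_root eT_sym).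
have := cardsID nbr_roots RV; rewrite (setIidPr nbr_roots_sub) cV cT; lia.
Qed.

Let Nr (r : T) : {set T} := [set y in Nx | fingraph.root ex y == r].
Definition pendant_roots : {set T} := [set r in nbr_roots | #|Nr r| == 1%N].

Lemma card_roots_nbrs : (2 * #|nbr_roots| <= degree e x + #|pendant_roots|)%N.
Proof.
have deg_sum : degree e x = \sum_(r in nbr_roots) #|Nr r|.
  rewrite /degree -sum1_card (partition_big (fingraph.root ex) (mem nbr_roots)) /=.
    by apply: eq_bigr => r _; rewrite -sum1_card; apply: eq_bigl => y; rewrite !inE.
  by move=> y yN; apply: imset_f.
have pendant_sum : #|pendant_roots| = \sum_(r in nbr_roots) (#|Nr r| == 1%N).
  rewrite -sum1_card (eq_bigl (fun r => (r \in nbr_roots) && (#|Nr r| == 1%N))).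
    by rewrite big_mkcondr; apply: eq_bigr => r _; case: (_ == _).
  by move=> r; rewrite !inE.
rewrite deg_sum pendant_sum -big_split /= mulnC -sum_nat_const.
apply: leq_sum => r /imsetP[y yN ->].
have : (0 < #|Nr (fingraph.root ex y)|)%N.
  by apply/card_gt0P; exists y; rewrite inE yN /=.
by case: #|_| => [|[|n]].
Qed.

Let comp (r : T) : {set T} := [set v in Vx | fingraph.root ex v == r].

Lemma comp_nbr r v u : v \in comp r -> e v u -> u \in Vx -> u \in comp r.
Proof.
rewrite !inE => /andP[vx /eqP <-] evu ux; rewrite ux /=; apply/eqP/esym.
by apply/(fingraph.rootP ex_sym)/connect1; rewrite /ex /induced_rel !inE vx ux.
Qed.

Hypothesis min_deg2 : forall v, (2 <= degree e v)%N.

Lemma pendant_comp_cycle r : r \in pendant_roots ->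
  exists c, is_cycle e c /\ {subset c <= comp r}.
Proof.
rewrite inE => /andP[_ /cards1P[w Nr_w]].
have : w \in Nr r by rewrite Nr_w set11.
rewrite !inE => /andP[exw /eqP rw].
have wC : w \in comp r by rewrite inE rw eqxx andbT nbr_del_vertex.
have two_nbrs v : exists u1 u2, [/\ u1 != u2, e v u1 & e v u2].
  have /card_gt1P[u1 [u2 [+ + u12]]] := min_deg2 v.
  by rewrite !inE; exists u1, u2.
apply: (exists_cycle_in e_sym e_irr wC).
- move=> v vC vw; have [u1 [u2 [u12 evu1 evu2]]] := two_nbrs v.
  (* Only w is adjacent to x in this component, so v keeps both neighbours. *)
  have nbr_V u : e v u -> u \in Vx.
    move=> evu; rewrite !inE; apply: contra_neq vw => ux.
    suff : v \in Nr r by rewrite Nr_w inE => /eqP.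
  by move: vC; rewrite !inE => /andP[_ ->]; rewrite -ux e_sym evu.
  by exists u1, u2; split; rewrite // (comp_nbr vC) ?nbr_V.
- have [u1 [u2 [u12 ewu1 ewu2]]] := two_nbrs w.
  case: (eqVneq u1 x) => [u1x|u1x].
    have u2V : u2 \in Vx by rewrite !inE -u1x eq_sym.
    by exists u2; rewrite ?(comp_nbr wC ewu2 u2V).
  have u1V : u1 \in Vx by rewrite !inE.
  by exists u1; rewrite ?(comp_nbr wC ewu1 u1V).
Qed.

Lemma card_pendant_lt k : Ok_free e k -> (#|pendant_roots| < k)%N.
Proof.
move=> Ok_free_e; rewrite ltnNge; apply/negP => k_le; apply: Ok_free_e.
pose s := enum pendant_roots.
have i_lt (i : 'I_k) : (i < size s)%N by rewrite -cardE (leq_trans (ltn_ord i)).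
have s_pendant (i : 'I_k) : nth x s i \in pendant_roots.
  by rewrite -mem_enum mem_nth.
have [c c_cycle] := fin_all_exists (fun i => pendant_comp_cycle (s_pendant i)).
exists c; split=> [i | i j ij u v ui vj]; first by case: (c_cycle i).
have := (c_cycle i).2 u ui; have := (c_cycle j).2 v vj.
rewrite !inE => /andP[vx /eqP rv] /andP[ux /eqP ru].
have : nth x s i != nth x s j by rewrite nth_uniq ?enum_uniq ?i_lt.
rewrite -ru -rv => ruv; split; first by apply: contraNneq ruv => ->.
apply: contraNN ruv => euv; apply/eqP/(fingraph.rootP ex_sym).
by apply: connect1; rewrite /ex /induced_rel !inE ux vx.
Qed.

End DeleteVertex.

Import GRing.Theory Num.Theory.
Local Open Scope ring_scope.

Theorem mainTheorem13 (T : finType) (e : rel T) (k : nat) (x : T) :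
  simple_graph e -> (1 <= k)%N -> Ok_free e k ->
  (forall v : T, (2 <= degree e v)%N) ->
  (((degree e x)%:Z - k%:Z + 1)%:~R / 2 : rat)
    <= (cycle_rank e [set: T] - cycle_rank e (~: [set x]))%:~R.
Proof.
move=> [e_sym e_irr] _ Ok_free_e min_deg2.
have edges := n_edges_del_vertex x e_sym e_irr.
have comps := n_components_del_vertex x e_sym e_irr.
have nbrs := card_roots_nbrs e x.
have pendant := card_pendant_lt x e_sym e_irr min_deg2 Ok_free_e.
have verts : #|[set: T]| = (#|~: [set x]| + 1)%N.
  by rewrite cardsT -(cardsC [set x]) cards1 addnC.
set dr := cycle_rank e [set: T] - cycle_rank e (~: [set x]).
have : (degree e x)%:Z - k%:Z + 1 <= dr + dr.
  by rewrite /dr /cycle_rank edges verts; move: comps nbrs pendant; lia.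
rewrite -(ler_int rat) !intrD; lra.
Qed.
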